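(* There is an absolute constant $c>0$ such that the following holds. Let $k\geq 2$ be an integer and let $A=\{a_1<\cdots<a_N\}$ be a finite set of real numbers which is $k$-convex. Then \[ |2^{k}A-(2^{k}-1)A|\geq c\,\frac{|A|^{k+1}}{2^{k^2}}. \]
   Context: For a set $A\subset\mathbb{R}$ and nonnegative integers $m,n$, $mA-nA=\{(x_1+\cdots+x_m)-(x_{m+1}+\cdots+x_{m+n}):x_1,\ldots,x_{m+n}\in A\}$. A finite set $A=\{a_1<\cdots<a_N\}$ of reals is regarded as the sequence of its elements in increasing order. Such a sequence is called $1$-convex (convex) if its sequence of first differences $a_{i+1}-a_i$, $1\leq i\leq N-1$, is strictly increasing. Inductively, for $k\geq 2$, the increasing sequence $a_1<\cdots<a_N$ is called $k$-convex if its sequence of first differences $(a_{i+1}-a_i)_{1\le i\le N-1}$ is $(k-1)$-convex (in particular this difference sequence is itself strictly increasing). *)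

From Stdlib Require Import Reals List.
Open Scope R_scope.

(* A finite set A = {a_0 < ... < a_(N-1)} is represented by the function
   a : nat -> R restricted to indices < N. *)

Definition strictly_increasing_upto (a : nat -> R) (N : nat) : Prop :=
  forall i : nat, (S i < N)%nat -> a i < a (S i).

Definition diffseq (a : nat -> R) : nat -> R := fun i => a (S i) - a i.

Fixpoint kconvex (k : nat) (a : nat -> R) (N : nat) : Prop :=
  match k with
  | O => strictly_increasing_upto a N
  | S k' => strictly_increasing_upto a N /\ kconvex k' (diffseq a) (N - 1)
  end.

Fixpoint sumR (m : nat) (u : nat -> R) : R :=
  match m with
  | O => 0
  | S m' => sumR m' u + u m'
  end.

(* x belongs to mA - nA, where A = {a i | i < N}. *)
Definition in_sumdiff (m n : nat) (a : nat -> R) (N : nat) (x : R) : Prop :=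
  exists f g : nat -> nat,
    (forall i, (i < m)%nat -> (f i < N)%nat) /\
    (forall j, (j < n)%nat -> (g j < N)%nat) /\
    x = sumR m (fun i => a (f i)) - sumR n (fun j => a (g j)).

From Stdlib Require Import Reals List Lia Lra Arith FinFun.
Open Scope R_scope.

(* Write A = {a_0 < ... < a_(N-1)} and D for its difference
   sequence d_j = a_(j+1) - a_j.  The sumsets obey a small calculus:
   mA - nA is closed under adding an element of m'A - n'A (landing in
   (m+m')A - (n+n')A), and since d_j = a_(j+1) - a_j lies in A - A, any
   y in mD - nD lies in (m+n)A - (m+n)A, so a_i + y lies in
   (m+n+1)A - (m+n)A.  For a k-convex A we then build, inside every gap
   [a_i, a_(i+1)), an explicit duplicate-free list of points of
   2^k A - (2^k - 1) A: for k = 0 it is [a_i], and for k+1 it is a_i plus the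
   concatenation, over j < i, of the lists built for D in its gaps
   [d_j, d_(j+1)); these gaps are disjoint and lie in [d_0, d_i) because D is
   increasing, so the pieces do not overlap and stay inside [a_i, a_(i+1)).
   A gap with index i >= k m carries at least m^k points, so the N - 1 gaps
   of A carry at least m^(k+1) points with m = (N-1)/(k+1).  Elementary
   estimates turn this into |2^k A - (2^k-1) A| >= N^(k+1) / (64 2^(k^2)). *)

(** Finite sums and the sumset calculus *)

Lemma sumR_ext (m : nat) (u v : nat -> R) :
  (forall t, (t < m)%nat -> u t = v t) -> sumR m u = sumR m v.
Proof. induction m; simpl; intros H; auto. rewrite IHm, H; auto. Qed.

Lemma sumR_add (p q : nat) (u : nat -> R) :
  sumR (p + q) u = sumR p u + sumR q (fun t => u (p + t)%nat).
Proof.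
  induction q; simpl.
  - rewrite Nat.add_0_r; ring.
  - rewrite Nat.add_succ_r; simpl; rewrite IHq; ring.
Qed.

Lemma sumR_const (m : nat) (c : R) : sumR m (fun _ => c) = INR m * c.
Proof. induction m; simpl sumR; [simpl; ring | rewrite IHm, S_INR; ring]. Qed.

Definition join_idx (m : nat) (f f' : nat -> nat) : nat -> nat :=
  fun t => if (t <? m)%nat then f t else f' (t - m)%nat.

Lemma sumR_join (m m' : nat) (f f' : nat -> nat) (u : nat -> R) :
  sumR (m + m') (fun t => u (join_idx m f f' t))
  = sumR m (fun t => u (f t)) + sumR m' (fun t => u (f' t)).
Proof.
  unfold join_idx. rewrite sumR_add. f_equal; apply sumR_ext; intros t Ht.
  - destruct (Nat.ltb_spec t m); [reflexivity | lia].
  - destruct (Nat.ltb_spec (m + t) m); [lia |]. do 2 f_equal. lia.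
Qed.

Lemma join_idx_bound (m m' N : nat) (f f' : nat -> nat) :
  (forall t, (t < m)%nat -> (f t < N)%nat) ->
  (forall t, (t < m')%nat -> (f' t < N)%nat) ->
  forall t, (t < m + m')%nat -> (join_idx m f f' t < N)%nat.
Proof.
  intros Hf Hf' t Ht. unfold join_idx.
  destruct (Nat.ltb_spec t m); [apply Hf | apply Hf']; lia.
Qed.

Lemma in_sumdiff_zero (a : nat -> R) (N : nat) : in_sumdiff 0 0 a N 0.
Proof.
  exists (fun _ => 0%nat), (fun _ => 0%nat).
  split; [intros; lia | split; [intros; lia | simpl; ring]].
Qed.

Lemma in_sumdiff_add (m n m' n' : nat) (a : nat -> R) (N : nat) (x y : R) :
  in_sumdiff m n a N x -> in_sumdiff m' n' a N y ->
  in_sumdiff (m + m') (n + n') a N (x + y).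
Proof.
  intros [f [g [Hf [Hg ->]]]] [f' [g' [Hf' [Hg' ->]]]].
  exists (join_idx m f f'), (join_idx n g g').
  split; [|split].
  - apply join_idx_bound; assumption.
  - apply join_idx_bound; assumption.
  - rewrite !sumR_join. ring.
Qed.

Lemma in_sumdiff_opp (m n : nat) (a : nat -> R) (N : nat) (x : R) :
  in_sumdiff m n a N x -> in_sumdiff n m a N (- x).
Proof.
  intros [f [g [Hf [Hg ->]]]]. exists g, f.
  split; [assumption | split; [assumption | ring]].
Qed.

Lemma in_sumdiff_sumR (r p q : nat) (a : nat -> R) (N : nat) (u : nat -> R) :
  (forall t, (t < r)%nat -> in_sumdiff p q a N (u t)) ->
  in_sumdiff (r * p) (r * q) a N (sumR r u).
Proof.
  induction r as [|r IH]; intros Hu; simpl sumR.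
  - apply in_sumdiff_zero.
  - replace (S r * p)%nat with (r * p + p)%nat by lia.
    replace (S r * q)%nat with (r * q + q)%nat by lia.
    apply in_sumdiff_add; [apply IH; intros t Ht |]; apply Hu; lia.
Qed.

Lemma in_sumdiff_elem (n : nat) (a : nat -> R) (N i : nat) :
  (i < N)%nat -> in_sumdiff (S n) n a N (a i).
Proof.
  intros Hi. exists (fun _ => i), (fun _ => i).
  split; [intros; lia | split; [intros; lia |]].
  rewrite !sumR_const, S_INR. ring.
Qed.

Lemma in_sumdiff_diffseq (a : nat -> R) (N j : nat) :
  (S j < N)%nat -> in_sumdiff 1 1 a N (diffseq a j).
Proof.
  intros Hj. unfold diffseq. unfold Rminus.
  exact (in_sumdiff_add 1 0 0 1 a N _ _
           (in_sumdiff_elem 0 a N (S j) Hj)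
           (in_sumdiff_opp 1 0 a N _ (in_sumdiff_elem 0 a N j ltac:(lia)))).
Qed.

Lemma in_sumdiff_lift (m n : nat) (a : nat -> R) (N : nat) (y : R) :
  in_sumdiff m n (diffseq a) (N - 1) y -> in_sumdiff (m + n) (m + n) a N y.
Proof.
  intros [f [g [Hf [Hg ->]]]].
  assert (Hsum : forall r h, (forall t, (t < r)%nat -> (h t < N - 1)%nat) ->
            in_sumdiff r r a N (sumR r (fun t => diffseq a (h t)))).
  { intros r h Hh.
    assert (Hterm : forall t, (t < r)%nat -> in_sumdiff 1 1 a N (diffseq a (h t)))
      by (intros t Ht; apply in_sumdiff_diffseq; pose proof (Hh t Ht); lia).
    pose proof (in_sumdiff_sumR r 1 1 a N _ Hterm) as Hr.
    rewrite Nat.mul_1_r in Hr. exact Hr. }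
  unfold Rminus.
  apply in_sumdiff_add; [apply Hsum | apply in_sumdiff_opp, Hsum]; assumption.
Qed.

Lemma increasing_le (b : nat -> R) (N j l : nat) :
  strictly_increasing_upto b N -> (j <= l)%nat -> (l < N)%nat -> b j <= b l.
Proof.
  intros Hb Hjl HlN. induction l as [|l IH].
  - replace j with 0%nat by lia. lra.
  - destruct (Nat.eq_dec j (S l)) as [-> | Hne]; [lra |].
    pose proof (Hb l HlN). assert (b j <= b l) by (apply IH; lia). lra.
Qed.

Lemma kconvex_increasing (k : nat) (a : nat -> R) (N : nat) :
  kconvex k a N -> strictly_increasing_upto a N.
Proof. destruct k; simpl; tauto. Qed.

Fixpoint concat_upto (f : nat -> list R) (n : nat) : list R :=
  match n with
  | O => nil
  | S n' => concat_upto f n' ++ f n'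
  end.

Lemma in_concat_upto (f : nat -> list R) (n : nat) (x : R) :
  In x (concat_upto f n) <-> exists j, (j < n)%nat /\ In x (f j).
Proof.
  induction n as [|n IH]; simpl.
  - split; [tauto | intros [j [Hj _]]; lia].
  - rewrite in_app_iff, IH. split.
    + intros [[j [Hj Hx]] | Hx]; [exists j | exists n]; split; auto; lia.
    + intros [j [Hj Hx]].
      destruct (Nat.eq_dec j n) as [-> | Hne]; [right; assumption |].
      left. exists j. split; [lia | assumption].
Qed.

(* Lists lying in consecutive half-open intervals [b j, b (j+1)) of a
   nondecreasing b are pairwise disjoint, so their concatenation is
   duplicate-free when each of them is. *)
Lemma NoDup_concat_upto (f : nat -> list R) (b : nat -> R) (n : nat) :
  (forall j l, (j <= l <= n)%nat -> b j <= b l) ->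
  (forall j, (j < n)%nat -> NoDup (f j)) ->
  (forall j x, (j < n)%nat -> In x (f j) -> b j <= x < b (S j)) ->
  NoDup (concat_upto f n).
Proof.
  induction n as [|n IH]; intros Hb Hnd Hint; simpl; [constructor |].
  apply NoDup_app.
  - apply IH; intros; [apply Hb | apply Hnd | apply (Hint j)]; auto; lia.
  - apply Hnd; lia.
  - intros x Hx Hx'. apply in_concat_upto in Hx as [j [Hj Hx]].
    pose proof (Hint j x ltac:(lia) Hx). pose proof (Hint n x ltac:(lia) Hx').
    assert (b (S j) <= b n) by (apply Hb; lia). lra.
Qed.

Lemma length_concat_upto_ge (f : nat -> list R) (n p c : nat) :
  (forall j, (p <= j < n)%nat -> (c <= length (f j))%nat) ->
  ((n - p) * c <= length (concat_upto f n))%nat.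
Proof.
  induction n as [|n IH]; intros Hc; cbn [concat_upto]; [simpl; lia |].
  rewrite length_app.
  assert (IHn : ((n - p) * c <= length (concat_upto f n))%nat)
    by (apply IH; intros; apply Hc; lia).
  destruct (Nat.le_gt_cases p n) as [Hpn | Hpn].
  - pose proof (Hc n ltac:(lia)).
    replace (S n - p)%nat with (S (n - p)) by lia. rewrite Nat.mul_succ_l. lia.
  - replace (S n - p)%nat with 0%nat by lia. lia.
Qed.

Lemma length_concat_upto_pow (f : nat -> list R) (k m n : nat) :
  (forall j, (k * m <= j)%nat -> (m ^ k <= length (f j))%nat) ->
  (S k * m <= n)%nat -> (m ^ S k <= length (concat_upto f n))%nat.
Proof.
  intros Hf Hn.
  eapply Nat.le_trans; [| apply (length_concat_upto_ge f n (k * m) (m ^ k))].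
  - simpl. apply Nat.mul_le_mono_r. simpl in Hn. lia.
  - intros j Hj. apply Hf. lia.
Qed.

(** The points of 2^k A - (2^k - 1) A found in the gap [a_i, a_(i+1)) *)

Fixpoint gap_points (k : nat) (a : nat -> R) (i : nat) : list R :=
  match k with
  | O => a i :: nil
  | S k' => map (Rplus (a i)) (concat_upto (gap_points k' (diffseq a)) i)
  end.

Lemma gap_points_in_sumset (k : nat) :
  forall (a : nat -> R) (N i : nat) (x : R), (S i < N)%nat ->
  In x (gap_points k a i) -> in_sumdiff (2 ^ k) (2 ^ k - 1) a N x.
Proof.
  induction k as [|k IH]; intros a N i x Hi Hx; simpl in Hx.
  - destruct Hx as [<- | []]. exact (in_sumdiff_elem 0 a N i ltac:(lia)).
  - apply in_map_iff in Hx as [y [<- Hy]].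
    apply in_concat_upto in Hy as [j [Hj Hy]].
    pose proof (in_sumdiff_lift _ _ a N y (IH _ (N - 1)%nat j y ltac:(lia) Hy)) as Hlift.
    pose proof (Nat.pow_nonzero 2 k ltac:(lia)).
    replace (2 ^ S k - 1)%nat with (0 + (2 ^ k + (2 ^ k - 1)))%nat by (simpl; lia).
    replace (2 ^ S k)%nat with (1 + (2 ^ k + (2 ^ k - 1)))%nat by (simpl; lia).
    apply in_sumdiff_add; [apply in_sumdiff_elem; lia | exact Hlift].
Qed.

Lemma gap_points_in_gap (k : nat) :
  forall (a : nat -> R) (N i : nat) (x : R), kconvex k a N -> (S i < N)%nat ->
  In x (gap_points k a i) -> a i <= x < a (S i).
Proof.
  induction k as [|k IH]; intros a N i x Hconv Hi Hx; simpl in Hx.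
  - destruct Hx as [<- | []]. pose proof (Hconv i Hi). lra.
  - destruct Hconv as [Ha Hd].
    pose proof (kconvex_increasing _ _ _ Hd) as Hdinc.
    apply in_map_iff in Hx as [y [<- Hy]].
    apply in_concat_upto in Hy as [j [Hj Hy]].
    pose proof (IH _ (N - 1)%nat j y Hd ltac:(lia) Hy) as [Hlo Hhi].
    assert (Hd0 : 0 < diffseq a 0) by (pose proof (Ha 0%nat ltac:(lia)); unfold diffseq; lra).
    assert (diffseq a 0 <= diffseq a j) by (apply (increasing_le _ (N - 1)); auto; lia).
    assert (diffseq a (S j) <= diffseq a i) by (apply (increasing_le _ (N - 1)); auto; lia).
    unfold diffseq in *. lra.
Qed.

Lemma gap_points_NoDup (k : nat) :
  forall (a : nat -> R) (N i : nat), kconvex k a N -> (S i < N)%nat ->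
  NoDup (gap_points k a i).
Proof.
  induction k as [|k IH]; intros a N i Hconv Hi; simpl.
  - repeat constructor. intros [].
  - destruct Hconv as [_ Hd].
    apply Injective_map_NoDup; [intros u v; apply Rplus_eq_reg_l |].
    apply NoDup_concat_upto with (b := diffseq a).
    + intros j l Hjl. apply (increasing_le _ (N - 1)); [exact (kconvex_increasing _ _ _ Hd) | lia | lia].
    + intros j Hj. apply (IH _ (N - 1)%nat); [exact Hd | lia].
    + intros j x Hj Hx. apply (gap_points_in_gap k _ (N - 1) j); auto; lia.
Qed.

Lemma gap_points_length (k : nat) :
  forall (a : nat -> R) (m i : nat), (k * m <= i)%nat ->
  (m ^ k <= length (gap_points k a i))%nat.
Proof.
  induction k as [|k IH]; intros a m i Hi; simpl; [lia |].
  rewrite length_map. apply length_concat_upto_pow; [| exact Hi].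
  intros j Hj. apply IH. exact Hj.
Qed.

Lemma sumset_count (k : nat) (a : nat -> R) (N m : nat) (L : list R) :
  kconvex k a N -> (1 <= N)%nat -> (S k * m <= N - 1)%nat ->
  (forall x, in_sumdiff (2 ^ k) (2 ^ k - 1) a N x -> In x L) ->
  (m ^ S k <= length L)%nat.
Proof.
  intros Hconv HN Hm HL.
  set (M := concat_upto (gap_points k a) (N - 1)).
  assert (HM : NoDup M).
  { apply NoDup_concat_upto with (b := a).
    - intros j l Hjl. apply (increasing_le _ N); [exact (kconvex_increasing _ _ _ Hconv) | lia | lia].
    - intros j Hj. apply (gap_points_NoDup k a N); [exact Hconv | lia].
    - intros j x Hj Hx. apply (gap_points_in_gap k a N j); auto; lia. }
  assert (Hincl : incl M L).
  { intros x Hx. apply in_concat_upto in Hx as [j [Hj Hx]].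
    apply HL, (gap_points_in_sumset k a N j); [lia | exact Hx]. }
  eapply Nat.le_trans; [| exact (NoDup_incl_length HM Hincl)].
  apply length_concat_upto_pow; [| exact Hm].
  intros j Hj. apply gap_points_length. exact Hj.
Qed.

(** Elementary estimates *)

Lemma pow_le_via_exponent (x e k : nat) :
  (x <= 2 ^ e)%nat -> (e * (k + 1) <= 6 + k * k)%nat ->
  (x ^ (k + 1) <= 2 ^ 6 * 2 ^ (k * k))%nat.
Proof.
  intros Hx He.
  apply Nat.le_trans with ((2 ^ e) ^ (k + 1))%nat; [apply Nat.pow_le_mono_l; exact Hx |].
  rewrite <- Nat.pow_mul_r, <- Nat.pow_add_r. apply Nat.pow_le_mono_r; lia.
Qed.

Lemma pow_2k2_bound (k : nat) :
  (2 <= k)%nat -> ((2 * k + 2) ^ (k + 1) <= 2 ^ 6 * 2 ^ (k * k))%nat.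
Proof.
  intros Hk.
  destruct (Nat.le_gt_cases k 3) as [Hk3 | Hk3].
  { apply (pow_le_via_exponent _ 3); [simpl | ]; nia. }
  destruct (Nat.eq_dec k 4) as [-> | Hk4].
  { apply (pow_le_via_exponent _ 4); simpl; lia. }
  apply (pow_le_via_exponent _ (k - 1)); [| nia].
  pose proof (Nat.pow_gt_lin_r 2 (k - 3) ltac:(lia)).
  replace (k - 1)%nat with (k - 3 + 2)%nat by lia.
  rewrite Nat.pow_add_r. simpl (2 ^ 2)%nat. lia.
Qed.

Lemma counting_estimate (k N m len : nat) :
  (2 <= k)%nat -> (N <= (k + 1) * (m + 1))%nat ->
  (m ^ (k + 1) <= len)%nat -> (1 <= len)%nat ->
  (N ^ (k + 1) <= 2 ^ 6 * 2 ^ (k * k) * len)%nat.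
Proof.
  intros Hk HN Hm Hlen.
  assert (Hm1 : ((m + 1) ^ (k + 1) <= 2 ^ (k + 1) * len)%nat).
  { destruct m as [|m].
    - rewrite Nat.pow_1_l. pose proof (Nat.pow_nonzero 2 (k + 1) ltac:(lia)). nia.
    - apply Nat.le_trans with ((2 * S m) ^ (k + 1))%nat; [apply Nat.pow_le_mono_l; lia |].
      rewrite Nat.pow_mul_l. apply Nat.mul_le_mono_l. exact Hm. }
  apply Nat.le_trans with (((k + 1) * (m + 1)) ^ (k + 1))%nat; [apply Nat.pow_le_mono_l; exact HN |].
  rewrite Nat.pow_mul_l.
  apply Nat.le_trans with ((k + 1) ^ (k + 1) * (2 ^ (k + 1) * len))%nat;
    [apply Nat.mul_le_mono_l; exact Hm1 |].
  rewrite Nat.mul_assoc, <- Nat.pow_mul_l.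
  apply Nat.mul_le_mono_r. replace ((k + 1) * 2)%nat with (2 * k + 2)%nat by lia.
  apply pow_2k2_bound. exact Hk.
Qed.

Theorem theorem3 :
  exists c : R, c > 0 /\
    forall (k : nat) (a : nat -> R) (N : nat),
      (2 <= k)%nat ->
      kconvex k a N ->
      forall L : list R,
        NoDup L ->
        (forall x : R, In x L <-> in_sumdiff (2 ^ k) (2 ^ k - 1) a N x) ->
        INR (length L) >= c * INR N ^ (k + 1) / 2 ^ (k * k).
Proof.
  exists (1 / 64). split; [lra |].
  intros k a N Hk Hconv L _ HL.
  destruct N as [|N'].
  { rewrite pow_i by lia. unfold Rdiv. rewrite Rmult_0_r, Rmult_0_l. apply Rle_ge, pos_INR. }
  set (N := S N') in *.
  set (m := ((N - 1) / S k)%nat).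
  assert (Hm : (S k * m <= N - 1)%nat) by apply Nat.Div0.mul_div_le.
  assert (HNm : (N <= (k + 1) * (m + 1))%nat).
  { pose proof (Nat.div_mod (N - 1) (S k) ltac:(lia)) as Hdiv.
    pose proof (Nat.mod_upper_bound (N - 1) (S k) ltac:(lia)). fold m in Hdiv. lia. }
  assert (Hcount : (m ^ (k + 1) <= length L)%nat).
  { rewrite Nat.add_1_r. apply (sumset_count k a N); [exact Hconv | lia | exact Hm |].
    intros x Hx. apply HL. exact Hx. }
  assert (Hnonempty : (1 <= length L)%nat).
  { destruct L as [|x L']; [| simpl; lia].
    exfalso. apply (proj2 (HL (a 0%nat))).
    pose proof (Nat.pow_nonzero 2 k ltac:(lia)).
    pose proof (in_sumdiff_elem (2 ^ k - 1) a N 0 ltac:(lia)) as Ha0.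
    replace (S (2 ^ k - 1)) with (2 ^ k)%nat in Ha0 by lia. exact Ha0. }
  pose proof (counting_estimate k N m (length L) Hk HNm Hcount Hnonempty) as Hest.
  apply le_INR in Hest. rewrite !mult_INR, !pow_INR in Hest.
  replace (INR 2) with 2 in Hest by (simpl; lra).
  assert (HP : 0 < 2 ^ (k * k)) by (apply pow_lt; lra).
  apply Rle_ge. unfold Rdiv.
  apply (Rmult_le_reg_r (64 * 2 ^ (k * k))); [lra |].
  replace (1 * / 64 * INR N ^ (k + 1) * / 2 ^ (k * k) * (64 * 2 ^ (k * k)))
    with (INR N ^ (k + 1)) by (field; lra).
  simpl (2 ^ 6) in Hest. lra.
Qed.
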